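(* Let $S$ and $T$ be sets with $|T|\leq|S|$, let $\Phi_S$ be the full set of transition functions on $S$, and let $\Phi'_T$ be any set of transition functions on $T$. Then the machine $S\times\Phi_S$ is $T\times\Phi'_T$-complete.
   Context: For a set $S$, a transition function on $S$ is a function $S\to S$; the full set $\Phi_S$ is the set of all such functions. A machine $S\times\Phi'_S$ is a pair of a set $S$ and a subset $\Phi'_S\subseteq\Phi_S$. Isomorphism: $S\times\Phi'_S$ and $T\times\Phi'_T$ are isomorphic iff $|S|=|T|$, $|\Phi'_S|=|\Phi'_T|$, and there exist bijections $g:S\to T$, $h:\Phi'_S\to\Phi'_T$ with $g(\varphi(s))=h(\varphi)(g(s))$ for all $s\in S$, $\varphi\in\Phi'_S$. Functional reduction: $S\times\Phi'_2$ is a functional reduction of $S\times\Phi'_1$ iff $\Phi'_2\subseteq\Phi'_1$. State reduction: $S'\times\Phi'_{S'}$ is a state reduction of $S\times\Phi'_S$ iff (1) $S'\subseteq S$; (2) every $\varphi'\in\Phi'_{S'}$ agrees on $S'$ with some $\varphi\in\Phi'_S$; (3) for every $\varphi\in\Phi'_S$ with $\varphi(S')\subseteq S'$ there is $\varphi'\in\Phi'_{S'}$ agreeing with $\varphi$ on $S'$. A machine $B$ is a sub-machine of $A$ iff $B$ is obtained from $A$ by a functional reduction followed by a state reduction. A machine $S\times\Phi'_S$ is $T\times\Phi'_T$-complete if some sub-machine of $S\times\Phi'_S$ is isomorphic to $T\times\Phi'_T$. *)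

(** A machine: carrier type [S] and a set [P] of transition functions S -> S. *)
Record machine := Machine { mstate : Type ; mfun : (mstate -> mstate) -> Prop }.

Definition bijection {X Y : Type} (f : X -> Y) : Prop :=
  exists g : Y -> X, (forall x, g (f x) = x) /\ (forall y, f (g y) = y).

Definition card_le (T S : Type) : Prop :=
  exists f : T -> S, forall x y, f x = f y -> x = y.

(** Isomorphism of machines: bijections g on states and h on the transition
    sets with g (phi s) = h phi (g s).  (The cardinality equalities of the
    definition are implied by the existence of these bijections.) *)
Definition machine_iso (A B : machine) : Prop :=
  exists (g : mstate A -> mstate B)
         (h : {phi : mstate A -> mstate A | mfun A phi} ->
              {psi : mstate B -> mstate B | mfun B psi}),
    bijection g /\ bijection h /\
    forall (s : mstate A) (phi : {phi : mstate A -> mstate A | mfun A phi}),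
      g (proj1_sig phi s) = proj1_sig (h phi) (g s).

Definition functional_reduction {S : Type} (P2 P1 : (S -> S) -> Prop) : Prop :=
  forall phi, P2 phi -> P1 phi.

(** State reduction of (S, P): the subset S' is given by a predicate [A] on S,
    the reduced machine has carrier {s | A s} and transition set [Q]. *)
Definition state_reduction {S : Type} (P : (S -> S) -> Prop) (A : S -> Prop)
    (Q : ({s : S | A s} -> {s : S | A s}) -> Prop) : Prop :=
  (forall phi', Q phi' ->
     exists phi, P phi /\ forall x : {s : S | A s}, proj1_sig (phi' x) = phi (proj1_sig x)) /\
  (forall phi, P phi -> (forall s, A s -> A (phi s)) ->
     exists phi', Q phi' /\ forall x : {s : S | A s}, proj1_sig (phi' x) = phi (proj1_sig x)).

(** B is a sub-machine of (S, P): a functional reduction followed by a state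
    reduction.  Since the carrier of a state reduction is a subset of S,
    sub-machines are described by (P2, A, Q). *)
Definition sub_machine {S : Type} (P : (S -> S) -> Prop) (B : machine) : Prop :=
  exists (P2 : (S -> S) -> Prop) (A : S -> Prop)
         (Q : ({s : S | A s} -> {s : S | A s}) -> Prop),
    functional_reduction P2 P /\ state_reduction P2 A Q /\
    machine_iso (Machine {s : S | A s} Q) B.

Definition complete {S : Type} (P : (S -> S) -> Prop) (B : machine) : Prop :=
  sub_machine P B.

Definition full_fun (S : Type) : (S -> S) -> Prop := fun _ => True.

(** Embed T into S by an injection f and keep only the states in the range of f.
    Every transition function of T, transported along f, extends to a function on S,
    so functionally reducing the full set Phi_S to the functions that restrict along f
    to members of Phi'_T and then reducing to the range of f yields a machine that is
    a conjugate of T x Phi'_T by the bijection between T and the range of f. *)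

From Stdlib Require Import ClassicalEpsilon FunctionalExtensionality ProofIrrelevance.

Lemma machine_iso_conj (X Y : Type) (g : X -> Y) (g' : Y -> X) (P : (Y -> Y) -> Prop) :
  (forall x, g' (g x) = x) -> (forall y, g (g' y) = y) ->
  machine_iso (Machine X (fun phi => P (fun y => g (phi (g' y))))) (Machine Y P).
Proof.
  intros gK g'K.
  exists g, (fun phi : {phi : X -> X | P (fun y => g (phi (g' y)))} =>
              exist P (fun y => g (proj1_sig phi (g' y))) (proj2_sig phi)).
  split; [|split].
  - exists g'; split; assumption.
  - assert (conj_back : forall psi : {psi | P psi},
               P (fun y => g (g' (proj1_sig psi (g (g' y)))))).
    { intros [psi Ppsi]; simpl.
      replace (fun y => g (g' (psi (g (g' y))))) with psi; [exact Ppsi|].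
      apply functional_extensionality; intro y; now rewrite !g'K. }
    exists (fun psi => exist _ (fun x => g' (proj1_sig psi (g x))) (conj_back psi)).
    split.
    + intros [phi Pphi]; apply eq_sig_hprop; [intros; apply proof_irrelevance|].
      apply functional_extensionality; intro x; simpl; now rewrite !gK.
    + intros [psi Ppsi]; apply eq_sig_hprop; [intros; apply proof_irrelevance|].
      apply functional_extensionality; intro y; simpl; now rewrite !g'K.
  - intros x [phi Pphi]; simpl; now rewrite gK.
Qed.

Section Range.

Context {T S : Type} (f : T -> S).
Hypothesis f_inj : forall t t', f t = f t' -> t = t'.

Definition in_range (s : S) : Prop := exists t, f t = s.

Definition corestr (t : T) : {s | in_range s} := exist in_range (f t) (ex_intro _ t eq_refl).

Definition range_inv (x : {s | in_range s}) : T :=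
  proj1_sig (constructive_indefinite_description _ (proj2_sig x)).

Lemma f_range_inv (x : {s | in_range s}) : f (range_inv x) = proj1_sig x.
Proof. exact (proj2_sig (constructive_indefinite_description _ (proj2_sig x))). Qed.

Lemma range_inv_eq (x : {s | in_range s}) (t : T) : proj1_sig x = f t -> range_inv x = t.
Proof. intro xE; apply f_inj; now rewrite f_range_inv. Qed.

Lemma range_inv_corestr (t : T) : range_inv (corestr t) = t.
Proof. now apply range_inv_eq. Qed.

Lemma corestr_range_inv (x : {s | in_range s}) : corestr (range_inv x) = x.
Proof.
  apply eq_sig_hprop; [intros; apply proof_irrelevance|].
  apply f_range_inv.
Qed.

Lemma extend_along (psi : T -> T) : exists phi : S -> S, forall t, phi (f t) = f (psi t).
Proof.
  exists (fun s => match excluded_middle_informative (in_range s) with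
           | left r => f (psi (range_inv (exist _ s r)))
           | right _ => s
           end).
  intro t; destruct excluded_middle_informative as [r | nr].
  - now rewrite (range_inv_eq (exist _ (f t) r) t).
  - exfalso; apply nr; now exists t.
Qed.

Variable PhiT : (T -> T) -> Prop.

Definition restricts_into (phi : S -> S) : Prop :=
  exists psi, PhiT psi /\ forall t, phi (f t) = f (psi t).

Definition conj_range (phi' : {s | in_range s} -> {s | in_range s}) (t : T) : T :=
  range_inv (phi' (corestr t)).

Lemma state_reduction_range :
  state_reduction restricts_into in_range (fun phi' => PhiT (conj_range phi')).
Proof.
  split.
  - intros phi' PhiT_phi'.
    destruct (extend_along (conj_range phi')) as [phi phiE].
    exists phi; split; [now exists (conj_range phi')|].
    intro x; rewrite <- (corestr_range_inv x) at 2; simpl.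
    rewrite phiE; unfold conj_range; rewrite corestr_range_inv.
    symmetry; apply f_range_inv.
  - intros phi [psi [PhiT_psi phiE]] closed.
    exists (fun x => exist in_range (phi (proj1_sig x)) (closed _ (proj2_sig x))).
    split; [|reflexivity].
    replace (conj_range _) with psi; [exact PhiT_psi|].
    apply functional_extensionality; intro t.
    symmetry; apply range_inv_eq, phiE.
Qed.

End Range.

Theorem theorem9 (S T : Type) (PhiT : (T -> T) -> Prop) :
  card_le T S -> complete (full_fun S) (Machine T PhiT).
Proof.
  intros [f f_inj].
  exists (restricts_into f PhiT), (in_range f), (fun phi' => PhiT (conj_range f phi')).
  split; [intros ? ?; exact I|split].
  - now apply state_reduction_range.
  - apply machine_iso_conj; intro.
    + now apply corestr_range_inv.
    + now apply range_inv_corestr.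
Qed.
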